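(* Suppose the matrix $A$ is diagonalisable with $2N$ distinct eigenvalues $\lambda_k^{(l)}$, $k=0,\dots,N-1$, $l=1,2$, and suppose $\gamma>0$ and $\gamma/2+\beta+T\alpha>1/T$. Then $\mathrm{Re}(\lambda_k^{(l)})\le0$ for all $k=0,\dots,N-1$ and $l=1,2$.
   Context: Parameters: $N>2$, $\alpha\ge0$, $\beta\ge0$, $\gamma>0$, $T>0$. $A\in\mathbb R^{2N\times 2N}$ is the drift matrix of the linear system in coordinates $(x_1,y_1,\dots,x_N,y_N)$ given, with cyclic indices ($x_{N+1}=x_1$, $y_{N+1}=y_1$, $x_0=x_N$), by $\dot x_n=y_n$, $\dot y_n=\gamma\big(\tfrac1T(x_{n+1}-x_n)-y_n\big)+\beta(y_{n+1}-y_n)+\alpha(x_{n+1}-2x_n+x_{n-1})$. *)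

From HB Require Import structures.
From mathcomp Require Import all_boot all_order all_algebra.
From mathcomp Require Import complex.
Set Implicit Arguments. Unset Strict Implicit. Unset Printing Implicit Defensive.
Import Order.TTheory GRing.Theory Num.Theory.
Local Open Scope ring_scope.

(* Drift matrix A in coordinates (x_1,y_1,...,x_N,y_N), 0-based:
   index 2n is x_{n+1}, index 2n+1 is y_{n+1}  (n = 0..N-1), cyclic mod N.
   Row of x_n :  dx_n = y_n.
   Row of y_n :  dy_n = gamma*((x_{n+1}-x_n)/T - y_n) + beta*(y_{n+1}-y_n)
                        + alpha*(x_{n+1} - 2 x_n + x_{n-1}). *)
Definition ind (b : bool) {R : pzRingType} : R := (b : nat)%:R.

Definition drift_mx (R : fieldType) (N : nat) (alpha beta gamma T : R)
  : 'M[R]_(2 * N) :=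
  \matrix_(i < 2 * N, j < 2 * N)
    let n := (i : nat)./2 in
    let xn := (2 * n)%N in
    let yn := (2 * n).+1 in
    let xs := (2 * (n.+1 %% N))%N in
    let ys := (2 * (n.+1 %% N)).+1 in
    let xp := (2 * ((n + N).-1 %% N))%N in
    if ~~ odd i then ind ((j : nat) == yn)
    else gamma * (T^-1 * (ind ((j : nat) == xs) - ind ((j : nat) == xn))
                  - ind ((j : nat) == yn))
         + beta * (ind ((j : nat) == ys) - ind ((j : nat) == yn))
         + alpha * (ind ((j : nat) == xs) - 2 * ind ((j : nat) == xn)
                    + ind ((j : nat) == xp)).

Definition complexify (R : rcfType) m n (M : 'M[R]_(m, n)) : 'M[R[i]]_(m, n) :=
  map_mx (fun x => (x%:C)%C) M.

From HB Require Import structures.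
From mathcomp Require Import all_boot all_order all_algebra.
From mathcomp Require Import complex ring lra zify.
Set Implicit Arguments. Unset Strict Implicit. Unset Printing Implicit Defensive.
Import Order.TTheory GRing.Theory Num.Theory.
Local Open Scope ring_scope.

(* If [A u = l u], then in coordinates [y_n = l x_n] and the [x_n] satisfy a
   cyclic second-order recurrence.  Multiplying it by [conj x_n] and summing
   gives a complex identity between [l], the energy [S = sum |x_n|^2] and the
   shift correlation [P = sum x_(n+1) conj x_n].  By Cauchy-Schwarz,
   [(Im P)^2 = (Im sum (x_(n+1) - x_n) conj x_n)^2 <= 2 S (S - Re P)], and with
   [t = 1/T] the hypothesis [gamma/2 + beta + T alpha > t] gives
   [2 t (t - beta) <= gamma t + 2 alpha].  Eliminating [Im l] from the real and
   imaginary parts of the identity, these two inequalities exclude [Re l > 0]. *)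

Lemma eigenvalue_col (F : fieldType) n (A : 'M[F]_n) l :
  eigenvalue A l -> exists2 u : 'cV_n, u != 0 & A *m u = l *: u.
Proof.
move/eigenvalueP => [v vA vnz].
have /det0P[w wnz wA] : \det (l%:M - A)^T == 0.
  by rewrite det_tr; apply/det0P; exists v; rewrite // mulmxBr vA mul_mx_scalar subrr.
exists w^T; first by rewrite trmx_eq0.
apply/eqP; rewrite -subr_eq0 -mul_scalar_mx -mulmxBl -oppr_eq0 -mulNmx opprB.
by rewrite -[_ - A]trmxK -trmx_mul wA trmx0.
Qed.

Lemma sum_ind_mul (Rg : pzRingType) m (u : 'I_m -> Rg) (k : 'I_m) :
  \sum_j ind (j == k) * u j = u k.
Proof.
rewrite (bigD1 k) //= eqxx /ind mul1r big1 ?addr0 // => j /negbTE->.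
by rewrite mul0r.
Qed.

Lemma half2 n : (2 * n)./2 = n.
Proof. by rewrite mul2n doubleK. Qed.

Lemma uphalf2 n : uphalf (2 * n) = n.
Proof. by rewrite mul2n uphalf_double. Qed.

Section DriftRows.
Variables (F : fieldType) (N : nat) (al be ga T : F).
Local Notation D := (drift_mx N al be ga T).

Fact x_ord_subproof (n : 'I_N) : (2 * n < 2 * N)%N.
Proof. by rewrite ltn_pmul2l. Qed.

Fact y_ord_subproof (n : 'I_N) : ((2 * n).+1 < 2 * N)%N.
Proof. by have := ltn_ord n; lia. Qed.

Definition x_ord (n : 'I_N) : 'I_(2 * N) := Ordinal (x_ord_subproof n).
Definition y_ord (n : 'I_N) : 'I_(2 * N) := Ordinal (y_ord_subproof n).

Lemma drift_x_row n j : D (x_ord n) j = ind (j == y_ord n).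
Proof. by rewrite mxE /= oddM /= half2. Qed.

Lemma drift_y_row n j :
  D (y_ord n) j = (ga / T + al) * ind (j == x_ord (ordS n))
    + (- (ga / T) - 2 * al) * ind (j == x_ord n)
    + (- ga - be) * ind (j == y_ord n)
    + be * ind (j == y_ord (ordS n))
    + al * ind (j == x_ord (ord_pred n)).
Proof. by rewrite mxE /= oddM /= uphalf2; ring. Qed.

End DriftRows.

Local Open Scope complex_scope.
Local Notation Re := complex.Re.
Local Notation Im := complex.Im.

Section DriftEigenvector.
Variables (R : rcfType) (N : nat) (al be ga T : R) (l : R[i]).
Variable u : 'cV[R[i]]_(2 * N).
Hypothesis Au : complexify (drift_mx N al be ga T) *m u = l *: u.

Let X n := u (x_ord n) 0.

Let entry_eq i : (complexify (drift_mx N al be ga T) *m u) i 0 = l * u i 0.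
Proof. by rewrite Au mxE. Qed.

Lemma eigen_entry_y n : u (y_ord n) 0 = l * X n.
Proof.
rewrite -entry_eq mxE -(sum_ind_mul (fun j => u j 0)).
by apply: eq_bigr => j _; rewrite mxE drift_x_row /ind rmorph_nat.
Qed.

Lemma eigen_recurrence n :
  l * (l * X n) = (ga / T + al)%:C * X (ordS n) + (- (ga / T) - 2 * al)%:C * X n
    + (- ga - be)%:C * (l * X n) + be%:C * (l * X (ordS n)) + al%:C * X (ord_pred n).
Proof.
rewrite -!eigen_entry_y -entry_eq mxE.
rewrite /X -!(sum_ind_mul (fun j => u j 0)) !mulr_sumr -!big_split /=.
apply: eq_bigr => j _; rewrite mxE drift_y_row /ind.
by rewrite !(rmorphD, rmorphM, rmorphN, rmorphB, rmorph_nat) /=; ring.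
Qed.

Lemma eigen_x_neq0 : u != 0 -> exists n, X n != 0.
Proof.
move=> unz; apply/existsP; apply: contraNT unz => /existsPn X0.
apply/eqP/matrixP => i k; rewrite (ord1 k) mxE.
have lt_half : (i./2 < N)%N by have := ltn_ord i; rewrite ltn_half_double -mul2n.
have /eqP Xi0 := negPn (X0 (Ordinal lt_half)).
have := odd_double_half i; rewrite -mul2n.
case: (odd i) => /= def_i.
  by rewrite (_ : i = y_ord (Ordinal lt_half)) ?eigen_entry_y ?Xi0 ?mulr0 //; apply: val_inj.
by rewrite (_ : i = x_ord (Ordinal lt_half)) //; apply: val_inj.
Qed.

End DriftEigenvector.

Section ComplexParts.
Variable R : rcfType.

Lemma mulc_conj (z : R[i]) : z * conjc z = (Re z ^+ 2 + Im z ^+ 2)%:C.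
Proof.
by case: z => a b; apply/eqP; rewrite eq_complex /=; apply/andP; split; apply/eqP; ring.
Qed.

Lemma Re_sum I (r : seq I) (P : pred I) (F : I -> R[i]) :
  Re (\sum_(i <- r | P i) F i) = \sum_(i <- r | P i) Re (F i).
Proof. by apply: big_morph => // [[a b] [c d]]. Qed.

Lemma Im_sum I (r : seq I) (P : pred I) (F : I -> R[i]) :
  Im (\sum_(i <- r | P i) F i) = \sum_(i <- r | P i) Im (F i).
Proof. by apply: big_morph => // [[a b] [c d]]. Qed.

End ComplexParts.

Section Energy.
Variables (R : rcfType) (N : nat) (X : 'I_N -> R[i]).
Local Notation a n := (Re (X n)).
Local Notation b n := (Im (X n)).

Definition energy : R := \sum_n (a n ^+ 2 + b n ^+ 2).
Definition shift_corr : R[i] := \sum_n X (ordS n) * conjc (X n).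

Lemma energy_gt0 n : X n != 0 -> 0 < energy.
Proof.
move=> Xn0; rewrite /energy (bigD1 n) //=.
have : 0 <= \sum_(m | m != n) (a m ^+ 2 + b m ^+ 2).
  by rewrite sumr_ge0 // => m _; rewrite addr_ge0 ?sqr_ge0.
have : 0 < a n ^+ 2 + b n ^+ 2.
  rewrite lt_def addr_ge0 ?sqr_ge0 // andbT paddr_eq0 ?sqr_ge0 // !sqrf_eq0.
  by apply: contra Xn0; case: (X n) => ?? /andP[/eqP /= -> /eqP /= ->].
lra.
Qed.

Lemma shift_corr_Im_bound : 0 < energy ->
  Im shift_corr ^+ 2 <= 2 * energy * (energy - Re shift_corr).
Proof.
move=> S_gt0; set S := energy in S_gt0 *; set Pr := Re _; set Pi := Im _.
have defPr : Pr = \sum_n (a (ordS n) * a n + b (ordS n) * b n).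
  rewrite /Pr Re_sum; apply: eq_bigr => n _.
  by case: (X n) => ??; case: (X (ordS n)) => ??; rewrite /= mulrN opprK.
have defPi : Pi = \sum_n (b (ordS n) * a n - a (ordS n) * b n).
  rewrite /Pi Im_sum; apply: eq_bigr => n _.
  by case: (X n) => ??; case: (X (ordS n)) => ??; rewrite /= mulrN addrC.
have shiftS : \sum_n (a (ordS n) ^+ 2 + b (ordS n) ^+ 2) = S.
  by rewrite [RHS](reindex_inj (@ordS_inj N)).
have defS : \sum_n (a n ^+ 2 + b n ^+ 2) = S by [].
clearbody S Pr Pi.
(* [sum_n |S (X (n+1) - X n) - i Pi X n|^2 >= 0], in real coordinates. *)
have : 0 <= \sum_n ((S * (b (ordS n) - b n) - Pi * a n) ^+ 2
                   + (S * (a (ordS n) - a n) + Pi * b n) ^+ 2).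
  by rewrite sumr_ge0 // => n _; rewrite addr_ge0 ?sqr_ge0.
have -> : \sum_n ((S * (b (ordS n) - b n) - Pi * a n) ^+ 2
                   + (S * (a (ordS n) - a n) + Pi * b n) ^+ 2)
        = S ^+ 2 * \sum_n (a (ordS n) ^+ 2 + b (ordS n) ^+ 2)
          + (S ^+ 2 + Pi ^+ 2) * \sum_n (a n ^+ 2 + b n ^+ 2)
          - 2 * S ^+ 2 * \sum_n (a (ordS n) * a n + b (ordS n) * b n)
          - 2 * S * Pi * \sum_n (b (ordS n) * a n - a (ordS n) * b n).
  rewrite !mulr_sumr -big_split -!sumrB /=.
  by apply: eq_bigr => n _; ring.
rewrite shiftS defS -defPr -defPi.
have -> : S ^+ 2 * S + (S ^+ 2 + Pi ^+ 2) * S - 2 * S ^+ 2 * Pr - 2 * S * Pi * Pi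
          = S * (2 * S * (S - Pr) - Pi ^+ 2) by ring.
by rewrite pmulr_rge0 // subr_ge0.
Qed.

Lemma energy_identity (l : R[i]) (c1 c2 c3 c4 c5 : R) :
  (forall n, l * (l * X n) = c1%:C * X (ordS n) + c2%:C * X n + c3%:C * (l * X n)
                             + c4%:C * (l * X (ordS n)) + c5%:C * X (ord_pred n)) ->
  l * (l * energy%:C) = c1%:C * shift_corr + c2%:C * energy%:C + c3%:C * (l * energy%:C)
                        + c4%:C * (l * shift_corr) + c5%:C * conjc shift_corr.
Proof.
move=> recX.
have -> : energy%:C = \sum_n X n * conjc (X n).
  by rewrite rmorph_sum; apply: eq_bigr => n _; rewrite mulc_conj.
have -> : conjc shift_corr = \sum_n X (ord_pred n) * conjc (X n).
  rewrite rmorph_sum [RHS](reindex_inj (@ordS_inj N)); apply: eq_bigr => n _.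
  by rewrite ordSK rmorphM /= conjcK mulrC.
rewrite /shift_corr !mulr_sumr -!big_split /=; apply: eq_bigr => n _.
transitivity (l * (l * X n) * conjc (X n)); first by ring.
by rewrite recX; ring.
Qed.

End Energy.

Lemma drift_energy_parts (R : rcfType) (al be ga t S : R) (l P : R[i]) :
  l * (l * S%:C) = (ga * t + al)%:C * P + (- (ga * t) - 2 * al)%:C * S%:C
                   + (- ga - be)%:C * (l * S%:C) + be%:C * (l * P) + al%:C * conjc P ->
  (Re l ^+ 2 - Im l ^+ 2 + ga * Re l) * S + be * (Re l * (S - Re P) + Im l * Im P)
    + (ga * t + 2 * al) * (S - Re P) = 0
  /\ Im l * ((2 * Re l + ga) * S + be * (S - Re P)) = (be * Re l + ga * t) * Im P.
Proof.
case: l P => [p q] [Pr Pi] /eqP; rewrite eq_complex /= => /andP[/eqP eRe /eqP eIm].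
split; lra.
Qed.

Section DampedEnergy.
Variables (R : realFieldType) (al be ga t p q S s Pi : R).
Hypotheses (al_ge0 : 0 <= al) (be_ge0 : 0 <= be) (ga_gt0 : 0 < ga) (t_gt0 : 0 < t).
Hypothesis damping : 2 * t * (t - be) <= ga * t + 2 * al.
Hypotheses (S_gt0 : 0 < S) (Pi_bound : Pi ^+ 2 <= 2 * S * s).
Hypothesis re_eq :
  (p ^+ 2 - q ^+ 2 + ga * p) * S + be * (p * s + q * Pi) + (ga * t + 2 * al) * s = 0.
Hypothesis im_eq : q * ((2 * p + ga) * S + be * s) = (be * p + ga * t) * Pi.

Let D := be * p + ga * t.
Let E := (2 * p + ga) * S + be * s.
Let K := (p ^+ 2 + ga * p) * S + (ga * t + 2 * al) * s.
Let Rh := K + be * p * s.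
Let G := D * S - be * E.

Let im_eqD : D * Pi = q * E.
Proof. by rewrite /D /E -im_eq; ring. Qed.

Let re_eqRh : q ^+ 2 * S - be * q * Pi = Rh.
Proof. by rewrite -[Rh]subr0 -re_eq /Rh /K; ring. Qed.

Let elim_Pi : q ^+ 2 * G = D * Rh.
Proof.
rewrite -re_eqRh /G.
by transitivity (D * (q ^+ 2 * S) - be * q * (q * E)); [ring | rewrite -im_eqD; ring].
Qed.

Let elim_q : D != 0 -> Pi ^+ 2 * (D * G) = E ^+ 2 * Rh.
Proof.
move=> D_neq0; apply: (mulfI D_neq0).
transitivity ((D * Pi) ^+ 2 * G); first by ring.
by rewrite im_eqD; transitivity (E ^+ 2 * (q ^+ 2 * G)); [ring | rewrite elim_Pi; ring].
Qed.

Let s_ge0 : 0 <= s.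
Proof. by have := le_trans (sqr_ge0 Pi) Pi_bound; rewrite pmulr_rge0 // mulr_gt0. Qed.

Section PositiveRe.
Hypothesis p_gt0 : 0 < p.

Let K0_gt0 : 0 < (p ^+ 2 + ga * p) * S.
Proof. by rewrite mulr_gt0 // addr_gt0 ?exprn_gt0 ?mulr_gt0. Qed.

Let K_ge : (p ^+ 2 + ga * p) * S <= K.
Proof.
have := mulr_ge0 (ltW (mulr_gt0 ga_gt0 t_gt0)) s_ge0; have := mulr_ge0 al_ge0 s_ge0.
by rewrite /K; lra.
Qed.

Let Rh_ge : K <= Rh.
Proof. by have := mulr_ge0 (mulr_ge0 be_ge0 (ltW p_gt0)) s_ge0; rewrite /Rh; lra. Qed.

Let D_gt0 : 0 < D.
Proof.
by have := mulr_ge0 be_ge0 (ltW p_gt0); have := mulr_gt0 ga_gt0 t_gt0; rewrite /D; lra.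
Qed.

Let G_gt0 : 0 < G.
Proof.
rewrite ltNge; apply/negP => G_le0.
have := mulr_ge0_le0 (sqr_ge0 q) G_le0; rewrite elim_Pi.
by have := mulr_gt0 D_gt0 (lt_le_trans K0_gt0 (le_trans K_ge Rh_ge)); lra.
Qed.

Let DG_le : D * G <= ga ^+ 2 * t * (t - be) * S.
Proof.
rewrite -subr_ge0 (_ : _ - _ = be ^+ 2 * (p ^+ 2 * S + ga * (p * S) + D * s)).
  by rewrite mulr_ge0 ?sqr_ge0 // !addr_ge0 ?mulr_ge0 ?sqr_ge0 // ltW.
by rewrite /G /E /D; ring.
Qed.

Let E_sqr_Rh_ge : (ga * S) ^+ 2 * K <= E ^+ 2 * Rh.
Proof.
have gaS_ge0 : 0 <= ga * S by rewrite mulr_ge0 // ltW.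
have E_ge : ga * S <= E.
  have := mulr_ge0 (ltW p_gt0) (ltW S_gt0); have := mulr_ge0 be_ge0 s_ge0.
  by rewrite /E; lra.
apply: ler_pM; rewrite ?sqr_ge0 //; first exact: le_trans (ltW K0_gt0) K_ge.
by rewrite !expr2 ler_pM.
Qed.

Fact damped_energy_Re_gt0_absurd : False.
Proof.
have E_sqr_Rh_le : E ^+ 2 * Rh <= 2 * S * s * (D * G).
  by rewrite -(elim_q (lt0r_neq0 D_gt0)) ler_wpM2r // mulr_ge0 // ltW.
have := ler_wpM2l (mulr_ge0 (mulr_ge0 (ler0n _ 2) (ltW S_gt0)) s_ge0) DG_le.
have := ler_wpM2l (mulr_ge0 (sqr_ge0 (ga * S)) s_ge0) damping.
have := mulr_gt0 (exprn_gt0 2 (mulr_gt0 ga_gt0 S_gt0)) K0_gt0.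
by have := E_sqr_Rh_ge; rewrite /K; lra.
Qed.

End PositiveRe.

Lemma damped_energy_Re_le0 : p <= 0.
Proof. by rewrite leNgt; apply/negP => /damped_energy_Re_gt0_absurd. Qed.

End DampedEnergy.

Theorem theorem3p2 (R : rcfType) (N : nat) (alpha beta gamma T : R) :
  (2 < N)%N -> 0 <= alpha -> 0 <= beta -> 0 < gamma -> 0 < T ->
  let A := complexify (drift_mx N alpha beta gamma T) in
  diagonalizable A ->
  (exists s : seq R[i],
      [/\ size s = (2 * N)%N, uniq s & forall l, l \in s -> eigenvalue A l]) ->
  gamma / 2 + beta + T * alpha > T^-1 ->
  forall l : R[i], eigenvalue A l -> complex.Re l <= 0.
Proof.
move=> _ al_ge0 be_ge0 ga_gt0 T_gt0 A _ _ stable l eig_l.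
have t_gt0 : 0 < T^-1 by rewrite invr_gt0.
have damping : 2 * T^-1 * (T^-1 - beta) <= gamma * T^-1 + 2 * alpha.
  have two_t_gt0 : 0 < 2 * T^-1 by rewrite mulr_gt0.
  have expand : 2 * T^-1 * (gamma / 2 + beta + T * alpha)
                 = gamma * T^-1 + 2 * beta * T^-1 + 2 * alpha.
    by field; rewrite gt_eqF.
  by move: stable; rewrite -(ltr_pM2l two_t_gt0) expand => /ltW; lra.
have [u u_neq0 Au] := eigenvalue_col eig_l.
pose X n := u (x_ord n) 0.
have [n Xn_neq0] : exists n, X n != 0 := eigen_x_neq0 Au u_neq0.
have S_gt0 := energy_gt0 (X := X) Xn_neq0.
have [re_eq im_eq] := drift_energy_parts (energy_identity (eigen_recurrence Au)).
exact: damped_energy_Re_le0 al_ge0 be_ge0 ga_gt0 t_gt0 damping S_gt0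
  (shift_corr_Im_bound S_gt0) re_eq im_eq.
Qed.
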